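(* Let $X$ be a Banach lattice with order continuous norm and $S$ a convex $C_0$-semigroup on $X$. Suppose that $S'_+(t,x)y=S'_-(t,x)y$ for some $x,y\in X$ and some $t\ge0$. Then the maps $[0,\infty)\to X$, $s\mapsto S'_\pm(s,x)y$ are continuous at $t$. In particular, $\lim_{s\downarrow0}S'_\pm(s,x)y=y$.
   Context: A Banach lattice $X$ has order continuous norm if $\|x_\alpha\|\to0$ for every net $x_\alpha\downarrow0$. An operator $T\colon X\to X$ is convex if $T(\lambda x+(1-\lambda)y)\le\lambda Tx+(1-\lambda)Ty$, bounded if $\sup_{\|x\|\le r}\|Tx\|<\infty$ for all $r>0$. A convex $C_0$-semigroup is a family $(S(t))_{t\ge0}$ of bounded convex operators $X\to X$ with $S(0)=\mathrm{id}$, $S(t+s)=S(t)S(s)$, and $S(t)x\to x$ as $t\downarrow0$. For $t\ge0$, $x,y\in X$: $S'_+(t,x)y:=\inf_{h>0}\frac{S(t)(x+hy)-S(t)x}{h}$ and $S'_-(t,x)y:=\sup_{h<0}\frac{S(t)(x+hy)-S(t)x}{h}$ (lattice infimum/supremum, which exist in $X$). *)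

From HB Require Import structures.
From mathcomp Require Import all_boot all_order all_algebra.
From mathcomp Require Import all_classical all_reals all_analysis.
Set Implicit Arguments. Unset Strict Implicit. Unset Printing Implicit Defensive.
Import Order.TTheory GRing.Theory Num.Theory.
Import numFieldNormedType.Exports.
Local Open Scope classical_set_scope.
Local Open Scope ring_scope.

(* A Banach lattice structure on a Banach space X: a partial order [vle]
   compatible with the vector operations, with binary suprema [vjoin],
   and a lattice norm (|x| <= |y| implies ||x|| <= ||y||). *)
Record banach_lattice (R : realType) (X : completeNormedModType R) := BanachLattice {
  vle : X -> X -> Prop;
  vjoin : X -> X -> X;
  vle_refl : forall x, vle x x;
  vle_anti : forall x y, vle x y -> vle y x -> x = y;
  vle_trans : forall x y z, vle x y -> vle y z -> vle x z;
  vle_add : forall x y z, vle x y -> vle (x + z) (y + z);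
  vle_scale : forall (a : R) x y, 0 <= a -> vle x y -> vle (a *: x) (a *: y);
  vjoin_ubl : forall x y, vle x (vjoin x y);
  vjoin_ubr : forall x y, vle y (vjoin x y);
  vjoin_lub : forall x y z, vle x z -> vle y z -> vle (vjoin x y) z;
  vnorm_mono : forall x y, vle (vjoin x (- x)) (vjoin y (- y)) -> `|x| <= `|y|
}.

Section BL.
Variables (R : realType) (X : completeNormedModType R) (L : banach_lattice X).

Definition is_lower_bound (A : set X) (z : X) := forall a, A a -> vle L z a.
Definition is_upper_bound (A : set X) (z : X) := forall a, A a -> vle L a z.
Definition is_inf (A : set X) (z : X) :=
  is_lower_bound A z /\ forall w, is_lower_bound A w -> vle L w z.
Definition is_sup (A : set X) (z : X) :=
  is_upper_bound A z /\ forall w, is_upper_bound A w -> vle L z w.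

Definition order_continuous :=
  forall (I : Type) (leI : I -> I -> Prop) (x : I -> X),
    (exists i : I, True) ->
    (forall i, leI i i) ->
    (forall i j k, leI i j -> leI j k -> leI i k) ->
    (forall i j, exists k, leI i k /\ leI j k) ->
    (forall i j, leI i j -> vle L (x j) (x i)) ->
    is_inf (range x) 0 ->
    forall eps : R, 0 < eps -> exists i0, forall i, leI i0 i -> `|x i| < eps.

Definition convex_op (T : X -> X) :=
  forall (l : R) x y, 0 <= l <= 1 ->
    vle L (T (l *: x + (1 - l) *: y)) (l *: T x + (1 - l) *: T y).

Definition bounded_op (T : X -> X) :=
  forall r : R, 0 < r -> exists M : R, forall x, `|x| <= r -> `|T x| <= M.

(* A convex C_0-semigroup; S t is only relevant for t >= 0. *)
Definition convex_C0_semigroup (S : R -> X -> X) :=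
  [/\ forall t, 0 <= t -> convex_op (S t),
      forall t, 0 <= t -> bounded_op (S t),
      S 0 = id,
      forall t s, 0 <= t -> 0 <= s -> S (t + s) = S t \o S s &
      forall x, S t x @[t --> 0^'+] --> x].

Definition dplus (S : R -> X -> X) (t : R) (x y : X) : X :=
  xget 0 (is_inf [set h^-1 *: (S t (x + h *: y) - S t x) | h in [set h : R | 0 < h]]).

Definition dminus (S : R -> X -> X) (t : R) (x y : X) : X :=
  xget 0 (is_sup [set h^-1 *: (S t (x + h *: y) - S t x) | h in [set h : R | h < 0]]).

End BL.

(* For fixed s, the difference quotients h |-> (S(s)(x + h y) - S(s) x) / h increase with h
   by convexity, so S'_+(s,x)y is the infimum of a family that decreases as h -> 0+ and is
   bounded below by the quotients at negative h.  Order continuity, applied to the net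
   (h, l) |-> quotient(h) - l indexed by a step h > 0 and a lower bound l, makes the
   quotients converge in norm to this infimum; S'_- is symmetric.  Since S'_- <= S'_+ and
   both lie between the quotients at -h and h, the equality S'_+(t,x)y = S'_-(t,x)y reduces
   continuity in s to continuity of the orbits s |-> S(s) z.  Right continuity of the orbits
   follows from continuity of the bounded convex operators S(t), which are locally
   Lipschitz; left continuity needs a Lipschitz bound for S(tau), tau small, that is
   uniform in tau, and the Baire category theorem provides it as a uniform boundedness
   principle for convex operators.  At t = 0 every quotient equals y because S(0) = id. *)

From HB Require Import structures.
From mathcomp Require Import all_boot all_order all_algebra.
From mathcomp Require Import all_classical all_reals all_analysis.
From mathcomp Require Import ring lra.
Import Order.TTheory GRing.Theory Num.Theory.
Import numFieldNormedType.Exports.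
Local Open Scope classical_set_scope.
Local Open Scope ring_scope.
Set Implicit Arguments. Unset Strict Implicit. Unset Printing Implicit Defensive.

Section banach_lattice_theory.
Variables (R : realType) (X : completeNormedModType R) (L : banach_lattice X).
Local Notation lev := (vle L).
Local Notation vjoin := (vjoin L).

Lemma levD a b c d : lev a b -> lev c d -> lev (a + c) (b + d).
Proof.
move=> ab cd; apply: (vle_trans (vle_add c ab)).
by rewrite !(addrC b); apply: vle_add.
Qed.

Lemma levN a b : lev a b -> lev (- b) (- a).
Proof.
by move=> /(vle_add (- a - b)); rewrite addrA subrr add0r addrCA subrr addr0.
Qed.

Lemma levN2 a b : lev (- a) (- b) -> lev b a.
Proof. by move/levN; rewrite !opprK. Qed.

Lemma subv_ge0 a b : lev 0 (b - a) <-> lev a b.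
Proof.
split; first by move/(vle_add a); rewrite add0r subrK.
by move/(vle_add (- a)); rewrite subrr.
Qed.

Lemma vjoinC a b : vjoin a b = vjoin b a.
Proof.
by apply: vle_anti; apply: vjoin_lub; (exact: vjoin_ubl || exact: vjoin_ubr).
Qed.

Lemma vjoin_r a b : lev a b -> vjoin a b = b.
Proof.
move=> ab; apply: vle_anti; last exact: vjoin_ubr.
exact: vjoin_lub (vle_refl _ _).
Qed.

Lemma vjoin_l a b : lev b a -> vjoin a b = a.
Proof. by rewrite vjoinC; apply: vjoin_r. Qed.

Definition vabs a := vjoin a (- a).

Lemma vabs_ge0 a : lev 0 (vabs a).
Proof.
have /(vle_scale (a := (2 : R)^-1)) : lev 0 (vabs a + vabs a).
  by rewrite -(subrr a); apply: levD; [apply: vjoin_ubl | apply: vjoin_ubr].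
rewrite scaler0 -mulr2n -[vabs a *+ 2]scaler_nat scalerA mulVf ?pnatr_eq0 // scale1r.
by apply; rewrite invr_ge0 ler0n.
Qed.

Lemma vabsN a : vabs (- a) = vabs a.
Proof. by rewrite /vabs opprK vjoinC. Qed.

Lemma vabs_id a : vabs (vabs a) = vabs a.
Proof.
apply: vjoin_l; apply: vle_trans (vabs_ge0 a).
by rewrite -oppr0; apply: levN; apply: vabs_ge0.
Qed.

Lemma norm_vabs a : `|vabs a| = `|a|.
Proof.
by apply/eqP; rewrite eq_le !(vnorm_mono (b := L)) // -!/(vabs _) vabs_id;
  apply: vle_refl.
Qed.

Lemma normv_le_sym_bound v c : lev (- c) v -> lev v c -> `|v| <= `|c|.
Proof.
move=> Ncv vc; apply: (vnorm_mono (b := L)); rewrite [X in lev _ X]vjoin_l.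
  by apply: vjoin_lub => //; apply: levN2; rewrite opprK.
exact: vle_trans Ncv vc.
Qed.

Lemma normv_between a v b : lev a v -> lev v b -> `|v| <= `|a| + `|b|.
Proof.
move=> av vb; rewrite -(norm_vabs a) -(norm_vabs b).
apply: le_trans (ler_normD _ _); apply: normv_le_sym_bound.
  rewrite opprD; apply: vle_trans av; rewrite -[X in lev _ X](addr0 a).
  apply: levD; last by rewrite -oppr0; apply: levN; apply: vabs_ge0.
  by apply: levN2; rewrite opprK; apply: vjoin_ubr.
apply: vle_trans vb _; rewrite -[X in lev X _](add0r b).
by apply: levD; [apply: vabs_ge0 | apply: vjoin_ubl].
Qed.

Lemma norm_vjoin0B a b : `|vjoin a 0 - vjoin b 0| <= `|a - b|.
Proof.
have vjoin0B_le c d : lev (vjoin c 0 - vjoin d 0) (vabs (c - d)).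
  have cd : lev (vjoin c 0) (vjoin (c - d) 0 + vjoin d 0).
    apply: vjoin_lub; first by rewrite -{1}(subrK d c); apply: levD; apply: vjoin_ubl.
    by rewrite -[X in lev X _](addr0 0); apply: levD; apply: vjoin_ubr.
  apply: vle_trans (vjoin_lub (vjoin_ubl _ _ _) (vabs_ge0 (c - d))).
  by move/(vle_add (- vjoin d 0)): cd; rewrite addrK.
rewrite -(norm_vabs (a - b)); apply: normv_le_sym_bound; last exact: vjoin0B_le.
by apply: levN2; rewrite opprK opprB -vabsN opprB; apply: vjoin0B_le.
Qed.

Lemma closed_vge0 : closed [set v | lev 0 v].
Proof.
move=> v clv; suff : vjoin (- v) 0 = 0.
  by move=> Nv0; apply: levN2; rewrite oppr0 -Nv0; apply: vjoin_ubl.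
apply/normr0_eq0/eqP; rewrite eq_le normr_ge0 andbT; apply/ler_addgt0Pr => e e0.
have [w [/= w0]] := clv _ (nbhsx_ballx v e e0); rewrite -ball_normE /= => vw.
have -> : vjoin (- v) 0 = vjoin (- v) 0 - vjoin (- w) 0.
  by rewrite (vjoin_r (a := - w)) ?subr0 // -oppr0; apply: levN.
by rewrite add0r ltW // (le_lt_trans (norm_vjoin0B _ _)) // opprK addrC distrC.
Qed.

Lemma is_inf_unique (A : set X) z1 z2 : is_inf L A z1 -> is_inf L A z2 -> z1 = z2.
Proof. by move=> [lb1 glb1] [lb2 glb2]; apply: vle_anti; [apply: glb2 | apply: glb1]. Qed.

Lemma is_sup_unique (A : set X) z1 z2 : is_sup L A z1 -> is_sup L A z2 -> z1 = z2.
Proof. by move=> [ub1 lub1] [ub2 lub2]; apply: vle_anti; [apply: lub1 | apply: lub2]. Qed.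

End banach_lattice_theory.

Definition slope (R : realType) (X : completeNormedModType R)
  (T : X -> X) (x y : X) (h : R) : X := h^-1 *: (T (x + h *: y) - T x).

Section convex_slopes.
Variables (R : realType) (X : completeNormedModType R) (L : banach_lattice X).
Local Notation lev := (vle L).
Variables (T : X -> X) (convT : convex_op L T).

Lemma slopeN x y h : slope T x (- y) h = - slope T x y (- h).
Proof. by rewrite /slope invrN scaleNr scalerN scaleNr opprK. Qed.

Lemma convex_op_line x y a b l : 0 <= l <= 1 ->
  lev (T (x + (l * a + (1 - l) * b) *: y))
      (l *: T (x + a *: y) + (1 - l) *: T (x + b *: y)).
Proof.
move=> l01; have := convT (x + a *: y) (x + b *: y) l01.
suff -> : l *: (x + a *: y) + (1 - l) *: (x + b *: y) = x + (l * a + (1 - l) * b) *: y by [].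
by rewrite !scalerDr !scalerA addrACA -scalerDl subrKC scale1r scalerDl.
Qed.

Lemma slope_le x y h1 h2 : 0 < h1 -> h1 <= h2 -> lev (slope T x y h1) (slope T x y h2).
Proof.
move=> h1_gt0 h12; have h2_gt0 : 0 < h2 by apply: lt_le_trans h12.
set l := h1 / h2.
have l01 : 0 <= l <= 1 by rewrite /l ler_pdivrMr // mul1r h12 andbT divr_ge0 // ltW.
have := convex_op_line x y h2 0 l01.
rewrite mulr0 addr0 divfK ?gt_eqF // scale0r addr0 => /(vle_add (- T x)).
have -> : l *: T (x + h2 *: y) + (1 - l) *: T x - T x = l *: (T (x + h2 *: y) - T x).
  by rewrite scalerBl scalerBr scale1r addrCA (addrC (T x)) addrK.
move/(vle_scale (a := h1^-1)); rewrite scalerA mulrA mulVf ?gt_eqF // mul1r.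
by apply; rewrite invr_ge0 ltW.
Qed.

Lemma slope_neg_le_pos x y h k : 0 < h -> 0 < k -> lev (slope T x y (- k)) (slope T x y h).
Proof.
move=> h_gt0 k_gt0; have hk_gt0 : 0 < h + k by rewrite addr_gt0.
set l := h / (h + k).
have l01 : 0 <= l <= 1.
  by rewrite /l ler_pdivrMr // mul1r lerDl (ltW k_gt0) andbT divr_ge0 // ltW.
have := convex_op_line x y (- k) h l01.
have -> : l * - k + (1 - l) * h = 0 by rewrite /l; field; rewrite gt_eqF.
rewrite scale0r addr0 => /subv_ge0.
set A := T (x + - k *: y) - T x; set B := T (x + h *: y) - T x.
have -> : l *: T (x + - k *: y) + (1 - l) *: T (x + h *: y) - T x = l *: A + (1 - l) *: B.
  by rewrite /A /B !scalerBr addrACA -opprD -scalerDl subrKC scale1r.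
move/(vle_scale (a := (h + k) / (h * k))); rewrite scaler0 scalerDr !scalerA.
have -> : (h + k) / (h * k) * l = k^-1 by rewrite /l; field; rewrite !gt_eqF.
have -> : (h + k) / (h * k) * (1 - l) = h^-1 by rewrite /l; field; rewrite !gt_eqF.
move=> H; apply/subv_ge0.
have -> : slope T x y h - slope T x y (- k) = k^-1 *: A + h^-1 *: B.
  by rewrite /slope invrN scaleNr opprK addrC.
by apply: H; rewrite divr_ge0 ?mulr_ge0 ?ltW.
Qed.

Lemma convex_lipschitz_at z (rho M : R) : 0 < rho ->
    (forall u, `|u - z| <= rho -> `|T u| <= M) ->
  forall u, `|u - z| <= rho -> `|T u - T z| <= M *+ 4 / rho * `|u - z|.
Proof.
move=> rho_gt0 TM u uz.
have [->|uz_neq0] := eqVneq u z; first by rewrite !subrr normr0 mulr0.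
set lam := `|u - z| / rho.
have lam_gt0 : 0 < lam by rewrite divr_gt0 // normr_gt0 subr_eq0.
have lam_le1 : lam <= 1 by rewrite ler_pdivrMr // mul1r.
set w := lam^-1 *: (u - z).
have u_lam : u = z + lam *: w by rewrite /w scalerA mulfV ?gt_eqF // scale1r addrC subrK.
have normw : `|w| = rho.
  by rewrite /w normrZ normfV gtr0_norm // invf_div divfK // normr_eq0 subr_eq0.
have TzMw (s : R) : `|s| = 1 -> `|T (z + s *: w) - T z| <= M + M.
  move=> s1; apply: le_trans (ler_normB _ _) _; apply: lerD; apply: TM.
    by rewrite addrC addKr normrZ s1 mul1r normw.
  by rewrite subrr normr0 ltW.
have := normv_between (slope_neg_le_pos z w lam_gt0 ltr01) (slope_le z w lam_gt0 lam_le1).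
rewrite /slope -u_lam !normrZ invrN1 invr1 normrN1 normr1 !mul1r normfV gtr0_norm // => Hlam.
have -> : M *+ 4 / rho * `|u - z| = lam * (M + M + (M + M)) by rewrite /lam; ring.
by rewrite -ler_pdivrMl // (le_trans Hlam) // lerD // TzMw ?normrN1 ?normr1.
Qed.

Lemma convex_bounded_continuous : bounded_op T -> continuous T.
Proof.
move=> boundT z; have [M TM] := boundT (`|z| + 1) (ltr_wpDl (normr_ge0 z) ltr01).
have TM1 u : `|u - z| <= 1 -> `|T u| <= M.
  by move=> uz; apply: TM; rewrite -(subrK z u) (le_trans (ler_normD _ _)) // addrC lerD.
have M_ge0 : 0 <= M by apply: le_trans (TM1 z _); rewrite ?subrr ?normr0.
apply/cvgrPdist_lt => e e_gt0; apply/nbhs_ballP.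
exists (Num.min 1 (e / (M *+ 4 + 1))).
  by rewrite /= lt_min ltr01 divr_gt0 ?ltr_wpDl ?mulrn_wge0.
move=> u; rewrite -ball_normE /= lt_min distrC => /andP [uz1 uze]; rewrite distrC.
apply: le_lt_trans (convex_lipschitz_at ltr01 TM1 (ltW uz1)) _.
have K_gt0 : 0 < M *+ 4 + 1 by rewrite ltr_wpDl ?mulrn_wge0.
rewrite divr1 (le_lt_trans (ler_wpM2r (normr_ge0 _) (_ : _ <= M *+ 4 + 1))) ?lerDl //.
by rewrite -ltr_pdivlMl // mulrC.
Qed.

End convex_slopes.

Section monotone_limit.
Variables (R : realType) (X : completeNormedModType R) (L : banach_lattice X).
Local Notation lev := (vle L).
Variables (oc : order_continuous L) (D : R -> X).
Hypothesis D_mono : forall h1 h2, 0 < h1 -> h1 <= h2 -> lev (D h1) (D h2).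

Definition minorant (l : X) := forall h, 0 < h -> lev l (D h).

Hypothesis D_minorant : exists l, minorant l.

Record net_index := NetIndex {
  net_h : R; net_l : X; net_h_gt0 : 0 < net_h; net_l_minorant : minorant net_l }.

Definition net_le (i j : net_index) := net_h j <= net_h i /\ lev (net_l i) (net_l j).

Definition net_gap (i : net_index) := D (net_h i) - net_l i.

Lemma minorant_vjoin l1 l2 : minorant l1 -> minorant l2 -> minorant (vjoin L l1 l2).
Proof. by move=> l1D l2D h h_gt0; apply: vjoin_lub; [apply: l1D | apply: l2D]. Qed.

Lemma net_gap_ge0 i : lev 0 (net_gap i).
Proof. by case: i => h l h_gt0 lD; apply/subv_ge0/lD. Qed.

(* A lower bound w >= 0 of all gaps makes every l0 + n w a minorant, hence n |w| <= |D 1 - l0|. *)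
Lemma net_gap_inf : is_inf L (range net_gap) 0.
Proof.
split; first by move=> _ [i _ <-]; apply: net_gap_ge0.
move=> w w_lb; have [l0 l0D] := D_minorant.
set w' := vjoin L w 0.
have w'_lb i : lev w' (net_gap i).
  by apply: vjoin_lub; [apply: w_lb; exists i | apply: net_gap_ge0].
have w'_ge0 : lev 0 w' by apply: vjoin_ubr.
have l0nD n : minorant (l0 + w' *+ n).
  elim: n => [|n IHn]; first by rewrite mulr0n addr0.
  move=> h h_gt0; rewrite mulrSr addrA addrC.
  by have /(vle_add (l0 + w' *+ n)) := w'_lb (NetIndex h_gt0 IHn); rewrite /net_gap /= subrK.
have nw'_le n : `|w'| *+ n <= `|D 1 - l0|.
  rewrite -normrMn; apply: normv_le_sym_bound.
    apply: vle_trans (_ : lev 0 _); first by rewrite -oppr0; apply/levN/subv_ge0/l0D.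
    by rewrite -scaler_nat -(scaler0 _ n%:R); apply: vle_scale.
  by move/(vle_add (- l0)): (l0nD n 1 ltr01); rewrite addrC addKr.
suff /normr0_eq0 w'0 : `|w'| = 0 by rewrite -w'0; apply: vjoin_ubl.
apply/eqP; rewrite eq_le normr_ge0 andbT leNgt; apply/negP => w'_gt0.
have := nw'_le (Num.truncn (`|D 1 - l0| / `|w'|)).+1; apply/negP; rewrite -ltNge.
by rewrite -mulr_natr -ltr_pdivrMl // mulrC truncnS_gt.
Qed.

Lemma net_gap_small e : 0 < e ->
  exists i, forall h, 0 < h -> h <= net_h i -> `|D h - net_l i| < e.
Proof.
move=> e_gt0; have [l0 l0D] := D_minorant.
have net_le_refl i : net_le i i by split; [apply: lexx | apply: vle_refl].
have net_le_trans i j k : net_le i j -> net_le j k -> net_le i k.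
  by move=> [hij lij] [hjk ljk]; split; [apply: le_trans hjk hij | apply: vle_trans lij ljk].
have net_le_directed i j : exists k, net_le i k /\ net_le j k.
  case: i j => [hi li hi_gt0 liD] [hj lj hj_gt0 ljD].
  have hij_gt0 : 0 < Num.min hi hj by rewrite lt_min hi_gt0.
  exists (NetIndex hij_gt0 (minorant_vjoin liD ljD)).
  by split; split; rewrite /= ?ge_min ?lexx ?orbT //; [apply: vjoin_ubl | apply: vjoin_ubr].
have net_gap_anti i j : net_le i j -> lev (net_gap j) (net_gap i).
  case: i j => [hi li hi_gt0 liD] [hj lj hj_gt0 ljD] [/= hji lij].
  by apply: levD; [apply: D_mono | apply: levN].
have [i0 i0_small] := oc (ex_intro _ (NetIndex ltr01 l0D) I) net_le_refl net_le_trans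
  net_le_directed net_gap_anti net_gap_inf e_gt0.
exists i0 => h h_gt0 h_le; apply: (i0_small (NetIndex h_gt0 (net_l_minorant i0))).
by split => //=; apply: vle_refl.
Qed.

Lemma monotone_cvg : exists z, is_inf L (D @` [set h | 0 < h]) z /\ D h @[h --> 0^'+] --> z.
Proof.
have D_cauchy : cauchy (D @ 0^'+).
  apply: cauchy_exP => e e_gt0; have [i Di] := net_gap_small e_gt0.
  exists (net_l i); suff : \forall h \near 0^'+, ball (net_l i) e (D h) by [].
  near=> h; rewrite -ball_normE /= distrC; apply: Di.
    by near: h; apply: nbhs_right_gt.
  by near: h; apply: nbhs_right_le; apply: net_h_gt0.
have /cauchy_cvgP/cvg_ex[z Dz] := D_cauchy.
exists z; split => //; split.
  move=> _ [h h_gt0 <-]; apply/subv_ge0.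
  apply: (closed_cvg _ (@closed_vge0 _ _ L) _ _ (cvgB (cvg_cst (D h)) Dz)).
  near=> h'; apply/subv_ge0/D_mono; last by near: h'; apply: nbhs_right_le.
  by near: h'; apply: nbhs_right_gt.
move=> w w_lb; apply/subv_ge0.
apply: (closed_cvg _ (@closed_vge0 _ _ L) _ _ (cvgB Dz (cvg_cst w))).
near=> h; apply/subv_ge0/w_lb; exists h => //.
by near: h; apply: nbhs_right_gt.
Unshelve. all: by end_near.
Qed.

End monotone_limit.

Lemma pointwise_bounded_ball (R : realType) (X : completeNormedModType R) (f : nat -> X -> R) :
    (forall k, continuous (f k)) -> (forall u, exists M, forall k, f k u <= M) ->
  exists x0 r (N : nat), 0 < r /\ forall k u, ball x0 r u -> f k u <= N%:R.
Proof.
move=> f_cont f_bnd; pose O (n : nat) := \bigcup_(k in setT) (f k @^-1` [set y | n%:R < y]).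
have O_open n : open (O n).
  by apply: bigcup_open => k _; apply: open_comp; [move=> u _; apply: f_cont | apply: open_gt].
have [n /denseNE [U [[x0 x0U] UO0]]] : exists n, ~ dense (O n).
  apply/existsNP => O_dense.
  have /(_ setT) [||u [_ Ou]] := Baire (fun n => conj (O_open n) (O_dense n)).
  - by exists 0.
  - exact: openT.
  have [M fM] := f_bnd u; have [k _ /=] := Ou (Num.truncn M).+1 I.
  by apply/negP; rewrite -leNgt (le_trans (fM k)) // ltW // truncnS_gt.
have /nbhs_ballP [r r_gt0 rU] := open_nbhs_nbhs x0U.
exists x0, r, n; split => // k u /rU Uu; rewrite leNgt; apply/negP => fku.
have : (U `&` O n) u by split => //; exists k.
by rewrite UO0.
Qed.

Section convex_uniform_boundedness.
Variables (R : realType) (X : completeNormedModType R) (L : banach_lattice X).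
Local Notation lev := (vle L).

Lemma convex_op_midpoint (T : X -> X) a b : convex_op L T ->
  lev (T (2^-1 *: (a + b))) (2^-1 *: (T a + T b)).
Proof.
move=> convT; have half01 : 0 <= (2^-1 : R) <= 1 by rewrite invr_ge0 ler0n invf_le1 ?ler1n.
have := convT _ a b half01; have -> : 1 - 2^-1 = 2^-1 :> R by rewrite {1}(splitr 1) mul1r addrK.
by rewrite !scalerDr.
Qed.

Lemma midpoint_reflect (z w : X) : 2^-1 *: ((w + w - z) + z) = w.
Proof. by rewrite subrK -mulr2n -[w *+ 2]scaler_nat scalerA mulVf ?pnatr_eq0 // scale1r. Qed.

(* Midpoint convexity carries the bound from the ball around x0 given by Baire to the
   reflected ball around z: T u lies below the mean of T (u + u - p) and T p, with
   p := z + z - x0, and above T z + T z - T (z + z - u). *)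
Lemma convex_pointwise_bounded_locally (T : nat -> X -> X) :
    (forall k, convex_op L (T k)) -> (forall k, continuous (T k)) ->
    (forall u, exists M, forall k, `|T k u| <= M) ->
  forall z, exists2 rho, 0 < rho & exists M, forall k u, `|u - z| <= rho -> `|T k u| <= M.
Proof.
move=> T_conv T_cont T_bnd z.
have [x0 [r [N [r_gt0 TN]]]] : exists x0 r (N : nat), 0 < r /\
    forall k u, ball x0 r u -> `|T k u| <= N%:R.
  apply: pointwise_bounded_ball => [k u|//].
  by apply: continuous_comp; [apply: T_cont | apply: norm_continuous].
set p := z + z - x0.
have [Z TZ] := T_bnd z; have [P TP] := T_bnd p.
exists (r / 4); first by rewrite divr_gt0.
set U := 2^-1 * (N%:R + P); exists (Z + Z + U + U) => k u uz.
have mean_bound v : `|v - z| <= r / 4 ->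
    lev (T k v) (2^-1 *: (T k (v + v - p) + T k p)) /\
    `|2^-1 *: (T k (v + v - p) + T k p)| <= U.
  move=> vz; split; first by rewrite -{1}(midpoint_reflect p v); apply: convex_op_midpoint.
  rewrite normrZ ger0_norm ?invr_ge0 ?ler0n // ler_wpM2l ?invr_ge0 ?ler0n //.
  rewrite (le_trans (ler_normD _ _)) // lerD // TN // -ball_normE /= distrC.
  have -> : v + v - p - x0 = 2 *: (v - z).
    by rewrite /p opprB addrA addrAC addrK opprD addrACA scaler_nat mulr2n.
  rewrite normrZ ger0_norm ?ler0n // (le_lt_trans (ler_wpM2l (ler0n _ 2) vz)) //.
  lra.
set u' := z + z - u.
have u'z : `|u' - z| <= r / 4 by rewrite /u' addrAC addrK distrC.
have [Tu Tu_bnd] := mean_bound u uz; have [Tu' Tu'_bnd] := mean_bound u' u'z.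
have lower : lev (T k z + T k z - 2^-1 *: (T k (u' + u' - p) + T k p)) (T k u).
  have := convex_op_midpoint u' u (T_conv k); rewrite midpoint_reflect.
  move/(vle_scale (ler0n R 2)); rewrite scalerA mulfV ?pnatr_eq0 // scale1r.
  rewrite scaler_nat mulr2n [T k u' + _]addrC => /(vle_add (- T k u')); rewrite addrK => zu.
  by apply: vle_trans zu; apply: levD (vle_refl _ _) (levN Tu').
apply: le_trans (normv_between lower Tu) _; rewrite lerD //.
by rewrite (le_trans (ler_normB _ _)) // lerD // (le_trans (ler_normD _ _)) // lerD.
Qed.

End convex_uniform_boundedness.

Section convex_semigroup.
Variables (R : realType) (X : completeNormedModType R) (L : banach_lattice X).
Local Notation lev := (vle L).
Variables (S : R -> X -> X) (hS : convex_C0_semigroup L S).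

Let S_convex t : 0 <= t -> convex_op L (S t). Proof. by case: hS => + _ _ _ _; apply. Qed.
Let S_bounded t : 0 <= t -> bounded_op (S t). Proof. by case: hS => _ + _ _ _; apply. Qed.
Let S0 : S 0 = id. Proof. by case: hS. Qed.
Let SD t s x : 0 <= t -> 0 <= s -> S (t + s) x = S t (S s x).
Proof. by case: hS => _ _ _ + _ t_ge0 s_ge0 => ->. Qed.
Let S_cvg0 x : S t x @[t --> 0^'+] --> x. Proof. by case: hS => _ _ _ _; apply. Qed.

Lemma S_continuous t : 0 <= t -> continuous (S t).
Proof. by move=> t_ge0; apply: convex_bounded_continuous; [apply: S_convex | apply: S_bounded]. Qed.

Lemma S_near0 z e : 0 < e -> exists2 d, 0 < d & forall r, 0 <= r -> r < d -> `|S r z - z| < e.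
Proof.
move=> e_gt0; have /cvgrPdist_lt/(_ e e_gt0) := @S_cvg0 z.
case=> d /= d_gt0 Sd; exists d => // r; rewrite le_eqVlt => /predU1P [<- _|r_gt0 rd].
  by rewrite S0 subrr normr0.
by rewrite distrC; apply: Sd; rewrite //= sub0r normrN gtr0_norm.
Qed.

Lemma S_right_continuous t z e : 0 <= t -> 0 < e ->
  exists2 d, 0 < d & forall r, 0 <= r -> r < d -> `|S (t + r) z - S t z| < e.
Proof.
move=> t_ge0 e_gt0; have /cvgrPdist_lt/(_ e e_gt0)/nbhs_ballP := @S_continuous t t_ge0 z.
case=> eta eta_gt0 Steta; have [d d_gt0 Sd] := S_near0 z eta_gt0.
exists d => // r r_ge0 rd; rewrite SD // distrC; apply: Steta.
by rewrite -ball_normE /= distrC; apply: Sd.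
Qed.

Lemma S_pointwise_bounded_null (tau : nat -> R) :
    (forall k, 0 <= tau k <= k.+1%:R^-1) ->
  forall w, exists M, forall k, `|S (tau k) w| <= M.
Proof.
move=> tau_null w; have [d d_gt0 Sd] := S_near0 w ltr01.
set K := Num.truncn d^-1.
exists (\sum_(i < K) `|S (tau i) w| + (`|w| + 1)) => k.
have [kK|Kk] := ltnP k K.
  rewrite ler_wpDr ?addr_ge0 // (bigD1 (Ordinal kK)) //= ler_wpDr //.
  by rewrite sumr_ge0.
have /andP [tau_ge0 tau_le] := tau_null k.
rewrite ler_wpDl ?sumr_ge0 // -(subrK w (S _ w)) (le_trans (ler_normD _ _)) //.
rewrite addrC lerD // ltW // Sd //; apply: le_lt_trans tau_le _.
rewrite invf_plt ?posrE ?ltr0n //; apply: lt_le_trans (truncnS_gt _) _.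
by rewrite ler_nat ltnS.
Qed.

Lemma S_locally_bounded_near0 z : exists2 d, 0 < d & exists2 rho, 0 < rho &
  exists M, forall tau u, 0 <= tau -> tau <= d -> `|u - z| <= rho -> `|S tau u| <= M.
Proof.
apply: contrapT => S_unbounded.
have /choice [tau_u tau_uP] : forall k : nat, exists q : R * X, [/\ 0 <= q.1 <= k.+1%:R^-1,
    `|q.2 - z| <= k.+1%:R^-1 & k%:R < `|S q.1 q.2|].
  move=> k; apply: contrapT => k_bounded.
  have k_gt0 : 0 < k.+1%:R^-1 :> R by rewrite invr_gt0 ltr0n.
  apply: S_unbounded; exists k.+1%:R^-1 => //; exists k.+1%:R^-1 => //; exists k%:R.
  move=> tau u tau_ge0 tau_le uz; rewrite leNgt; apply/negP => Su.
  by apply: k_bounded; exists (tau, u); split; rewrite ?tau_ge0.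
have tau_null k : 0 <= (tau_u k).1 <= k.+1%:R^-1 by case: (tau_uP k).
have [rho rho_gt0 [M SM]] := convex_pointwise_bounded_locally
  (fun k => S_convex (proj1 (andP (tau_null k))))
  (fun k => S_continuous (proj1 (andP (tau_null k))))
  (S_pointwise_bounded_null tau_null) z.
set k := (Num.truncn (`|M| + rho^-1)).+1.
have k_gt : `|M| + rho^-1 < k%:R by apply: truncnS_gt.
have [_ uz Su] := tau_uP k.
have : `|S (tau_u k).1 (tau_u k).2| <= M.
  apply: SM; apply: le_trans uz _; rewrite invf_ple ?posrE ?ltr0n // ltW //.
  by rewrite (le_lt_trans _ (lt_trans k_gt _)) ?ltr_nat // lerDr.
apply/negP; rewrite -ltNge; apply: le_lt_trans Su; apply: le_trans (ltW k_gt).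
by rewrite (le_trans (ler_norm M)) // lerDl invr_ge0 ltW.
Qed.

(* Writing t = (t - d0) + d0, S (t - r) z and S t z are images under S (t - d0) of
   S (d0 - r) z and S (d0 - r) (S r z), which are close by the uniform Lipschitz bound. *)
Lemma S_left_continuous t z e : 0 < t -> 0 < e ->
  exists2 d, 0 < d & forall r, 0 <= r -> r < d -> `|S (t - r) z - S t z| < e.
Proof.
move=> t_gt0 e_gt0.
have [d d_gt0 [rho rho_gt0 [M SM]]] := S_locally_bounded_near0 z.
set d0 := Num.min d t.
have d0_gt0 : 0 < d0 by rewrite lt_min d_gt0.
have t1_ge0 : 0 <= t - d0 by rewrite subr_ge0 ge_min lexx orbT.
set K := M *+ 4 / rho.
have K1_gt0 : 0 < K + 1.
  rewrite ltr_wpDl // divr_ge0 ?(ltW rho_gt0) // mulrn_wge0 //.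
  apply: le_trans (normr_ge0 _) (SM 0 z (lexx 0) (ltW d_gt0) _).
  by rewrite subrr normr0 ltW.
have S_lip tau u : 0 <= tau -> tau <= d0 -> `|u - z| <= rho ->
    `|S tau u - S tau z| <= K * `|u - z|.
  move=> tau_ge0 tau_le; apply: (convex_lipschitz_at (S_convex tau_ge0) rho_gt0) => v vz.
  by apply: SM => //; apply: le_trans tau_le _; rewrite ge_min lexx.
set p := S d0 z.
have /cvgrPdist_lt/(_ e e_gt0)/nbhs_ballP [eta eta_gt0 St1p] := @S_continuous _ t1_ge0 p.
have [d' d'_gt0 Sd'] : exists2 d', 0 < d' &
    forall r, 0 <= r -> r < d' -> `|S r z - z| < Num.min rho (eta / (K + 1)).
  by apply: S_near0; rewrite lt_min rho_gt0 divr_gt0.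
exists (Num.min d' d0) => [|r r_ge0]; first by rewrite lt_min d'_gt0.
rewrite lt_min => /andP [rd' rd0].
have /andP [Srz_rho Srz_eta] : (`|S r z - z| < rho) && (`|S r z - z| < eta / (K + 1)).
  by rewrite -lt_min; apply: Sd'.
have tau_ge0 : 0 <= d0 - r by rewrite subr_ge0 ltW.
have -> : S (t - r) z = S (t - d0) (S (d0 - r) z) by rewrite -SD // addrA subrK.
have -> : S t z = S (t - d0) p by rewrite -SD ?subrK // ltW.
rewrite distrC; apply: St1p; rewrite -ball_normE /= /p -{1}(subrK r d0).
rewrite [S (d0 - r + r) z]SD //.
apply: le_lt_trans (S_lip _ _ tau_ge0 _ (ltW Srz_rho)) _; first by rewrite lerBlDr lerDl.
rewrite (le_lt_trans (ler_wpM2r (normr_ge0 _) (_ : K <= K + 1))) ?lerDl //.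
by rewrite -ltr_pdivlMl // mulrC.
Qed.

Lemma S_orbit_continuous z (t : R) : 0 <= t ->
  S s z @[s --> within [set s : R | 0 <= s] (nbhs t)] --> S t z.
Proof.
move=> t_ge0; apply/cvgrPdist_lt => e e_gt0; apply/nbhs_ballP.
have [dR dR_gt0 SR] := S_right_continuous z t_ge0 e_gt0.
have right s : t <= s -> `|s - t| < dR -> `|S t z - S s z| < e.
  by move=> ts st; rewrite distrC -(subrKC t s) SR ?subr_ge0 // (le_lt_trans (ler_norm _)).
move: t_ge0; rewrite le_eqVlt => /predU1P [t0|t_gt0].
  by exists dR => // s; rewrite -ball_normE /= distrC => st s_ge0; apply: right; rewrite // -t0.
have [dL dL_gt0 SL] := S_left_continuous z t_gt0 e_gt0.
exists (Num.min dR dL); first by rewrite /= lt_min dR_gt0.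
move=> s; rewrite -ball_normE /= lt_min distrC => /andP [sdR sdL] s_ge0.
have [ts|st] := leP t s; first exact: right.
have -> : S s z = S (t - (t - s)) z by rewrite opprB addrCA subrr addr0.
by rewrite distrC SL ?subr_ge0 ?ltW // (le_lt_trans (ler_norm _)) // distrC.
Qed.

Lemma slope_continuous x y h (t : R) : 0 <= t ->
  slope (S s) x y h @[s --> within [set s : R | 0 <= s] (nbhs t)] --> slope (S t) x y h.
Proof.
move=> t_ge0; apply: cvgZ; first exact: cvg_cst.
by apply: cvgB; apply: S_orbit_continuous.
Qed.
Hypothesis oc : order_continuous L.

Lemma dplus_spec s x y : 0 <= s ->
  is_inf L (slope (S s) x y @` [set h | 0 < h]) (dplus L S s x y) /\
  slope (S s) x y h @[h --> 0^'+] --> dplus L S s x y.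
Proof.
move=> s_ge0; have convS := S_convex s_ge0.
have [|z [z_inf z_lim]] := monotone_cvg oc (slope_le convS x y).
  by exists (slope (S s) x y (-1)) => h h_gt0; apply: slope_neg_le_pos.
have dplus_inf : is_inf L (slope (S s) x y @` [set h | 0 < h]) (dplus L S s x y).
  by apply: xgetPex; exists z.
by rewrite (is_inf_unique dplus_inf z_inf).
Qed.

Lemma dminus_spec s x y : 0 <= s ->
  is_sup L (slope (S s) x y @` [set h | h < 0]) (dminus L S s x y) /\
  slope (S s) x y (- h) @[h --> 0^'+] --> dminus L S s x y.
Proof.
move=> s_ge0; have [[z_lb z_glb] z_lim] := dplus_spec x (- y) s_ge0.
set z := dplus L S s x (- y).
have Nz_sup : is_sup L (slope (S s) x y @` [set h | h < 0]) (- z).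
  split=> [_ [h h_lt0 <-]|w w_ub].
    rewrite -[h]opprK -[slope _ _ _ _]opprK -slopeN; apply: levN; apply: z_lb.
    by exists (- h); rewrite //= oppr_gt0.
  apply: levN2; rewrite opprK; apply: z_glb => _ [h h_gt0 <-].
  rewrite slopeN; apply: levN; apply: w_ub; exists (- h) => //=.
  by rewrite oppr_lt0.
have dminus_sup : is_sup L (slope (S s) x y @` [set h | h < 0]) (dminus L S s x y).
  by apply: xgetPex; exists (- z).
split=> //; rewrite (is_sup_unique dminus_sup Nz_sup).
have -> : (fun h => slope (S s) x y (- h)) = (fun h => - slope (S s) x (- y) h).
  by apply/funext => h; rewrite slopeN opprK.
exact: cvgN.
Qed.

Lemma dplus_le_slope s x y h : 0 <= s -> 0 < h -> lev (dplus L S s x y) (slope (S s) x y h).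
Proof. by move=> s_ge0 h_gt0; have [[lb _] _] := dplus_spec x y s_ge0; apply: lb; exists h. Qed.

Lemma slope_le_dminus s x y h : 0 <= s -> 0 < h -> lev (slope (S s) x y (- h)) (dminus L S s x y).
Proof.
move=> s_ge0 h_gt0; have [[ub _] _] := dminus_spec x y s_ge0.
by apply: ub; exists (- h); rewrite //= oppr_lt0.
Qed.

Lemma dminus_le_dplus s x y : 0 <= s -> lev (dminus L S s x y) (dplus L S s x y).
Proof.
move=> s_ge0; have [[_ lub] _] := dminus_spec x y s_ge0; have [[_ glb] _] := dplus_spec x y s_ge0.
apply: lub => _ [h h_lt0 <-]; apply: glb => _ [k k_gt0 <-].
by rewrite -[h]opprK; apply: (slope_neg_le_pos (S_convex s_ge0)); rewrite ?oppr_gt0.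
Qed.

Lemma slopes_squeeze_cvg x y t (f : R -> X) : 0 <= t ->
    dplus L S t x y = dminus L S t x y ->
    (forall s h, 0 <= s -> 0 < h ->
      lev (slope (S s) x y (- h)) (f s) /\ lev (f s) (slope (S s) x y h)) ->
  f s @[s --> within [set s : R | 0 <= s] (nbhs t)] --> dplus L S t x y.
Proof.
move=> t_ge0 dplus_dminus f_between; apply/cvgrPdist_lt => e e_gt0.
have e4_gt0 : 0 < e / 4 by rewrite divr_gt0.
have [_ /cvgrPdist_lt /(_ _ e4_gt0) slope_p] := dplus_spec x y t_ge0.
have [_ /cvgrPdist_lt /(_ _ e4_gt0) slope_m] := dminus_spec x y t_ge0.
near (0 : R)^'+ => h.
have h_gt0 : 0 < h by near: h; apply: nbhs_right_gt.
have /cvgrPdist_lt /(_ _ e4_gt0) Sp := @slope_continuous x y h t t_ge0.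
have /cvgrPdist_lt /(_ _ e4_gt0) Sm := @slope_continuous x y (- h) t t_ge0.
near=> s.
have s_ge0 : 0 <= s by near: s; apply: withinT.
have [fs_ge fs_le] := f_between s h s_ge0 h_gt0.
set w := dplus L S t x y.
have near_w k : `|w - slope (S t) x y k| < e / 4 -> `|slope (S t) x y k - slope (S s) x y k| < e / 4 ->
    `|slope (S s) x y k - w| < e / 4 + e / 4.
  by move=> wk ks; rewrite (le_lt_trans (ler_distD (slope (S t) x y k) _ _)) // distrC ltrD // distrC.
rewrite distrC (le_lt_trans (normv_between (vle_add (- w) fs_ge) (vle_add (- w) fs_le))) //.
have -> : e = e / 4 + e / 4 + (e / 4 + e / 4) by field.
rewrite ltrD // near_w //; [|by near: s|by near: h|by near: s].
by rewrite {1}/w dplus_dminus; near: h.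
Unshelve. all: by end_near.
Qed.

Lemma dplus_dminus_continuous x y t : 0 <= t -> dplus L S t x y = dminus L S t x y ->
  dplus L S s x y @[s --> within [set s : R | 0 <= s] (nbhs t)] --> dplus L S t x y /\
  dminus L S s x y @[s --> within [set s : R | 0 <= s] (nbhs t)] --> dminus L S t x y.
Proof.
move=> t_ge0 dplus_dminus; split; last rewrite -dplus_dminus.
all: apply: slopes_squeeze_cvg => // s h s_ge0 h_gt0.
all: have := slope_le_dminus x y s_ge0 h_gt0; have := dplus_le_slope x y s_ge0 h_gt0.
all: have := dminus_le_dplus x y s_ge0 => dm_dp dp_slope slope_dm.
  by split=> //; apply: vle_trans slope_dm dm_dp.
by split=> //; apply: vle_trans dm_dp dp_slope.
Qed.

Lemma slope_S0 x y h : h != 0 -> slope (S 0) x y h = y.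
Proof. by move=> h_neq0; rewrite /slope S0 /= addrAC subrr add0r scalerA mulVf ?scale1r. Qed.

Lemma dplus0 x y : dplus L S 0 x y = y.
Proof.
have [[lb glb] _] := dplus_spec x y (lexx 0); apply: (@vle_anti _ _ L).
  by rewrite -{2}(slope_S0 x y (oner_neq0 R)); apply: lb; exists 1; rewrite //= ltr01.
by apply: glb => _ [h h_gt0 <-]; rewrite slope_S0 ?gt_eqF //; apply: vle_refl.
Qed.

Lemma dminus0 x y : dminus L S 0 x y = y.
Proof.
have [[ub lub] _] := dminus_spec x y (lexx 0); apply: (@vle_anti _ _ L).
  by apply: lub => _ [h h_lt0 <-]; rewrite slope_S0 ?lt_eqF //; apply: vle_refl.
have m1_neq0 : - 1 != 0 :> R by rewrite oppr_eq0 oner_eq0.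
by rewrite -{1}(slope_S0 x y m1_neq0); apply: ub; exists (- 1); rewrite //= oppr_lt0.
Qed.

End convex_semigroup.

Theorem proposition3p2 (R : realType) (X : completeNormedModType R)
  (L : banach_lattice X) (S : R -> X -> X) :
  order_continuous L -> convex_C0_semigroup L S ->
  (forall (x y : X) (t : R), 0 <= t ->
     dplus L S t x y = dminus L S t x y ->
     (dplus L S s x y @[s --> within [set s : R | 0 <= s] (nbhs t)]
        --> dplus L S t x y) /\
     (dminus L S s x y @[s --> within [set s : R | 0 <= s] (nbhs t)]
        --> dminus L S t x y)) /\
  (forall x y : X,
     (dplus L S s x y @[s --> 0^'+] --> y) /\
     (dminus L S s x y @[s --> 0^'+] --> y)).
Proof.
move=> oc hS; split=> [x y t|x y]; first exact: dplus_dminus_continuous.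
have dplus_dminus0 : dplus L S 0 x y = dminus L S 0 x y.
  by rewrite (dplus0 hS oc) (dminus0 hS oc).
have [] := dplus_dminus_continuous hS oc (lexx 0) dplus_dminus0.
rewrite (dplus0 hS oc) (dminus0 hS oc) => dplus_cvg dminus_cvg.
have at_right0 : 0^'+ `=>` within [set s : R | 0 <= s] (nbhs 0) by apply: within_subset => s /ltW.
by split; [apply: cvg_trans dplus_cvg | apply: cvg_trans dminus_cvg]; apply: cvg_app.
Qed.
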